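(* Let $P,Q$ be finite posets, $R$ an indecomposable commutative unital ring, and $\Phi:I^3(P,R)\to I^3(Q,R)$ an $R$-linear algebra isomorphism. Then for all $x<y$ in $P$ with $l(x,y)=1$ there exist $u<v$ in $Q$ with $l(u,v)=1$ and $\sigma_{xy}\in J^3_2(Q,R)$ such that $\Phi(e_{xxy}+e_{xyy})=e_{uuv}+e_{uvv}+\sigma_{xy}$.
   Context: A commutative ring is indecomposable if its only idempotents are $0$ and $1$. For a finite poset $P$, $P^3_\le=\{(x,y,z)\in P^3: x\le y\le z\}$, and $I^3(P,R)$ is the $R$-module of functions $f:P^3_\le\to R$ with multiplication $(fg)(x_1,x_2,x_3)=\sum f(x_1,y_1,y_2)g(y_1,y_2,x_3)$ over all $x_1\le y_1\le x_2\le y_2\le x_3$. For $x\le y\le z$, $e_{xyz}$ is the function equal to $1$ at $(x,y,z)$ and $0$ elsewhere. For $a\le b$, $l(a,b)$ is the maximum of $|C|-1$ over chains $C$ in the interval $[a,b]$. $J^3_2(Q,R)=\{f\in I^3(Q,R): f(x_1,x_2,x_3)=0 \text{ whenever } l(x_1,x_3)<2\}$. *)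

From HB Require Import structures.
From mathcomp Require Import all_boot all_order all_algebra.
Set Implicit Arguments. Unset Strict Implicit. Unset Printing Implicit Defensive.
Import Order.TTheory GRing.Theory.
Local Open Scope order_scope.

Section Ternary.
Context {d : Order.disp_t} (P : finPOrderType d) (R : comNzRingType).

Definition trip := {t : P * P * P | (t.1.1 <= t.1.2) && (t.1.2 <= t.2)}.

Local Notation I3 := {ffun trip -> R}.

(* value of f at (x,y,z), with the convention 0 outside P^3_<= (never used
   outside P^3_<= in mul3 below) *)
Definition ev (f : I3) (x y z : P) : R :=
  match insub (x, y, z) with Some t => f t | None => 0%R end.

Definition mul3 (f g : I3) : I3 :=
  [ffun t : trip =>
     let x1 := (val t).1.1 in let x2 := (val t).1.2 in let x3 := (val t).2 in
     (\sum_(y1 : P) \sum_(y2 : P)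
        if [&& (x1 <= y1)%O, (y1 <= x2)%O, (x2 <= y2)%O & (y2 <= x3)%O]
        then ev f x1 y1 y2 * ev g y1 y2 x3 else 0)%R].

Definition scal3 (a : R) (f : I3) : I3 := [ffun t => (a * f t)%R].

Definition e3 (x y z : P) : I3 :=
  [ffun t : trip => if val t == (x, y, z) then 1%R else 0%R].

Definition is_chain_in (a b : P) (C : {set P}) : bool :=
  [forall x in C, (a <= x) && (x <= b)] &&
  [forall x in C, forall y in C, (x <= y) || (y <= x)].

Definition lng (a b : P) : nat :=
  (\max_(C : {set P} | is_chain_in a b C) #|C|).-1.

Definition J32 (f : I3) : Prop :=
  forall t : trip, (lng (val t).1.1 (val t).2 < 2)%N -> f t = 0%R.

End Ternary.

Notation I3 P R := {ffun trip P -> R}.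

Definition Rlinear3 {dP dQ : Order.disp_t} (P : finPOrderType dP)
  (Q : finPOrderType dQ) (R : comNzRingType) (Phi : I3 P R -> I3 Q R) : Prop :=
  (forall f g, Phi (f + g)%R = (Phi f + Phi g)%R) /\
  (forall a f, Phi (scal3 a f) = scal3 a (Phi f)).

Definition indecomposable (R : comNzRingType) : Prop :=
  forall e : R, (e * e = e -> e = 0 \/ e = 1)%R.

(* Evaluation on the diagonal is multiplicative, (fg)(s,s,s) = f(s,s,s) g(s,s,s),
   so associators vanish on the diagonal; conversely every e_abc with a <> c is a
   combination of associators. Hence J^3_1 (the functions vanishing on the
   diagonal) is the span of the associators and is preserved by every algebra
   homomorphism. Likewise J^3_2 is spanned by products of two elements of J^3_1,
   and such products are "balanced": they take the same value at (s,s,t) and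
   (s,t,t) whenever t covers s. So f = Phi(e_xxy + e_xyy) is an idempotent of
   J^3_1 outside J^3_2 (otherwise e_xyy = Phi^-1(f Phi(e_yyy)) would be balanced).
   On a covering pair s < t the idempotent f has the idempotent value
   f(s,s,t) = f(s,t,t), so indecomposability gives a pair u < v where it is 1.
   Transporting the corner identity (e_xxy + e_xyy) g (e_xxy + e_xyy) =
   g(x,y,y) (e_xxy + e_xyy) with g = Phi^-1(e_uvv) shows that f vanishes on all
   other covering pairs, hence f - e_uuv - e_uvv lies in J^3_2. *)

From mathcomp Require Import all_boot all_order all_algebra.
Set Implicit Arguments. Unset Strict Implicit. Unset Printing Implicit Defensive.
Import Order.TTheory GRing.Theory.
Local Open Scope ring_scope.
Local Open Scope order_scope.

Section Incidence.
Context {d : Order.disp_t} (P : finPOrderType d) (R : comNzRingType).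
Implicit Types (f g h : I3 P R) (a b c m s t x y z : P).

Lemma ev_out f x y z : ~~ ((x <= y) && (y <= z)) -> ev f x y z = 0.
Proof. by move=> H; rewrite /ev insubF //; apply/negbTE. Qed.

Lemma ev_in f x y z (H : (x <= y) && (y <= z)) :
  ev f x y z = f (Sub (x, y, z) H).
Proof. by rewrite /ev insubT. Qed.

Lemma ev_val f (t : trip P) : ev f (val t).1.1 (val t).1.2 (val t).2 = f t.
Proof.
case: t => [[[x y] z] H] /=; rewrite (ev_in f H); congr (f _); exact: val_inj.
Qed.

Lemma ev_ext f g :
  (forall x y z, x <= y -> y <= z -> ev f x y z = ev g x y z) -> f = g.
Proof.
move=> efg; apply/ffunP => t; rewrite -!ev_val.
by case: t => [[[x y] z] /= /andP[xy yz]]; apply: efg.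
Qed.

Lemma ev0 x y z : ev (0 : I3 P R) x y z = 0.
Proof.
case: (boolP ((x <= y) && (y <= z))) => H; last by rewrite ev_out.
by rewrite (ev_in _ H) ffunE.
Qed.

Lemma evD f g x y z : ev (f + g) x y z = ev f x y z + ev g x y z.
Proof.
case: (boolP ((x <= y) && (y <= z))) => H; first by rewrite !(ev_in _ H) ffunE.
by rewrite !ev_out ?addr0.
Qed.

Lemma evB f g x y z : ev (f - g) x y z = ev f x y z - ev g x y z.
Proof.
case: (boolP ((x <= y) && (y <= z))) => H; first by rewrite !(ev_in _ H) !ffunE.
by rewrite !ev_out ?subr0.
Qed.

Lemma evZ (r : R) f x y z : ev (scal3 r f) x y z = r * ev f x y z.
Proof.
case: (boolP ((x <= y) && (y <= z))) => H; first by rewrite !(ev_in _ H) ffunE.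
by rewrite !ev_out ?mulr0.
Qed.

Lemma scal3_0 f : scal3 0 f = 0.
Proof. by apply/ffunP => t; rewrite !ffunE mul0r. Qed.

Lemma ev_e3 a b c x y z : ev (e3 R a b c) x y z =
  if [&& x <= y, y <= z, x == a, y == b & z == c] then 1 else 0.
Proof.
case: (boolP ((x <= y) && (y <= z))) => H; last first.
  by rewrite ev_out //; case: (x <= y) H => //=; case: (y <= z).
by rewrite (ev_in _ H) ffunE /=; case/andP: H => -> -> /=; rewrite !xpair_eqE andbA.
Qed.

Lemma e3_decomp f :
  f = \sum_(t : trip P) scal3 (f t) (e3 R (val t).1.1 (val t).1.2 (val t).2).
Proof.
apply/ffunP => t0; rewrite sum_ffunE (bigD1 t0) //= big1 ?addr0.
  by rewrite !ffunE /= -!surjective_pairing eqxx mulr1.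
move=> t tt0; rewrite !ffunE /=; case: eqP => [E|]; last by rewrite mulr0.
by case/eqP: tt0; apply: val_inj; rewrite /= E -!surjective_pairing.
Qed.

Lemma ev_mul f g x y z : x <= y -> y <= z ->
  ev (mul3 f g) x y z =
  \sum_(y1 : P) \sum_(y2 : P)
     if [&& (x <= y1)%O, (y1 <= y)%O, (y <= y2)%O & (y2 <= z)%O]
     then ev f x y1 y2 * ev g y1 y2 z else 0.
Proof. by move=> xy yz; rewrite (ev_in _ (introT andP (conj xy yz))) ffunE. Qed.

Lemma mul3Dl f f' g : mul3 (f + f') g = mul3 f g + mul3 f' g.
Proof.
apply/ffunP => t; rewrite !ffunE -big_split; apply: eq_bigr => i _.
rewrite -big_split; apply: eq_bigr => j _ /=.
by case: ifP => _; rewrite ?evD ?mulrDl ?addr0.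
Qed.

Lemma mul3Dr f g g' : mul3 f (g + g') = mul3 f g + mul3 f g'.
Proof.
apply/ffunP => t; rewrite !ffunE -big_split; apply: eq_bigr => i _.
rewrite -big_split; apply: eq_bigr => j _ /=.
by case: ifP => _; rewrite ?evD ?mulrDr ?addr0.
Qed.

Lemma ev_mulL a b c g z1 z2 z3 : a <= b -> b <= c ->
  ev (mul3 (e3 R a b c) g) z1 z2 z3 =
  if [&& z1 <= z2, z2 <= z3, z1 == a, b <= z2 & z2 <= c] then ev g b c z3 else 0.
Proof.
move=> ab bc; case: (boolP ((z1 <= z2) && (z2 <= z3))) => [/andP[z12 z23]|]; last first.
  by move=> H; rewrite ev_out //; move: H; case: (z1 <= z2) => //=; case: (z2 <= z3).
rewrite ev_mul // z12 z23 (big_only1 b) // => [|i ib _]; last first.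
  by apply: big1 => j _; rewrite ev_e3 (negbTE ib) !andbF; case: ifP; rewrite ?mul0r.
rewrite (big_only1 c) // => [|j jc _]; last first.
  by rewrite ev_e3 (negbTE jc) !andbF; case: ifP; rewrite ?mul0r.
rewrite ev_e3 eqxx bc /=; case: (eqVneq z1 a) => [->|_] /=; last first.
  by case: ifP; rewrite ?andbF ?mul0r.
rewrite ab /=; case: (b <= z2) => //=; case: (z2 <= c) => //=.
case: (boolP (c <= z3)) => cz /=; first by rewrite eqxx mul1r.
by rewrite ev_out // bc.
Qed.

Lemma ev_mulR a b c g z1 z2 z3 : a <= b -> b <= c ->
  ev (mul3 g (e3 R a b c)) z1 z2 z3 =
  if [&& z1 <= z2, z2 <= z3, z3 == c, a <= z2 & z2 <= b] then ev g z1 a b else 0.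
Proof.
move=> ab bc; case: (boolP ((z1 <= z2) && (z2 <= z3))) => [/andP[z12 z23]|]; last first.
  by move=> H; rewrite ev_out //; move: H; case: (z1 <= z2) => //=; case: (z2 <= z3).
rewrite ev_mul // z12 z23 (big_only1 a) // => [|i ia _]; last first.
  by apply: big1 => j _; rewrite ev_e3 (negbTE ia) !andbF; case: ifP; rewrite ?mulr0.
rewrite (big_only1 b) // => [|j jb _]; last first.
  by rewrite ev_e3 (negbTE jb) !andbF; case: ifP; rewrite ?mulr0.
rewrite ev_e3 ab !eqxx /=; case: (eqVneq z3 c) => [->|_] /=; last first.
  by case: ifP; rewrite ?andbF ?mulr0.
rewrite bc /=; case: (a <= z2) => //=; case: (z2 <= b) => //=; rewrite ?andbF //.
case: (boolP (z1 <= a)) => za /=; first by rewrite mulr1.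
by rewrite ev_out // negb_and za.
Qed.

Lemma ev_mul_diag f g s : ev (mul3 f g) s s s = ev f s s s * ev g s s s.
Proof.
rewrite ev_mul // (big_only1 s) // => [|i si _]; last first.
  apply: big1 => j _; case: ifP => // /and4P[ss1 s1s _ _].
  by move: si; rewrite (@le_anti _ _ i s) ?s1s ?eqxx.
rewrite (big_only1 s) ?lexx // => j sj _; case: ifP => // /and4P[_ _ ss2 s2s].
by move: sj; rewrite (@le_anti _ _ j s) ?s2s ?eqxx.
Qed.

Lemma ev_mul_aac f g a c : a <= c -> ev (mul3 f g) a a c =
  \sum_(m : P) if ((a <= m) && (m <= c))%O then ev f a a m * ev g a m c else 0.
Proof.
move=> ac; rewrite ev_mul // (big_only1 a) // => [|i ia _].
  by apply: eq_bigr => m _; rewrite lexx.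
apply: big1 => j _; case: ifP => // /and4P[ai ia' _ _].
by move: ia; rewrite (@le_anti _ _ i a) ?ai ?ia' ?eqxx.
Qed.

Lemma ev_mul_acc f g a c : a <= c -> ev (mul3 f g) a c c =
  \sum_(m : P) if ((a <= m) && (m <= c))%O then ev f a m c * ev g m c c else 0.
Proof.
move=> ac; rewrite ev_mul //; apply: eq_bigr => m _.
rewrite (big_only1 c) ?lexx ?andbT // => j jc _; case: ifP => // /and4P[_ _ cj jc'].
by move: jc; rewrite (@le_anti _ _ j c) ?cj ?jc' ?eqxx.
Qed.

Definition covering a c := forall m, a < m -> m < c -> False.

Lemma covering_mem a c m : a <= c -> covering a c ->
  ((a <= m) && (m <= c)) = (m == a) || (m == c).
Proof.
move=> ac cov; apply/idP/idP; last by case/orP => /eqP->; rewrite ?lexx ?ac.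
case/andP=> am mc; case: (eqVneq m a) => //= ma; case: (eqVneq m c) => //= mc'.
by case: (cov m); rewrite lt_neqAle ?am ?mc ?andbT // eq_sym.
Qed.

Lemma sum_covering (F : P -> R) a c : a < c -> covering a c ->
  \sum_(m : P) (if ((a <= m) && (m <= c))%O then F m else 0) = F a + F c.
Proof.
move=> ac cov; rewrite (bigD1 a) // (bigD1 c) ?gt_eqF //= !lexx ltW //=.
rewrite big1 ?addr0 // => m /andP[mc ma].
by rewrite covering_mem ?(ltW ac) // (negbTE ma) (negbTE mc).
Qed.

Lemma covering_between a c : ~ covering a c -> exists2 m, a < m & m < c.
Proof.
case: (pickP (fun m => (a < m) && (m < c))) => [m /andP[am mc] _|none cov].
  by exists m.
by case: cov => m am mc; move: (none m); rewrite am mc.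
Qed.

Lemma ex_lower_cover a c m0 : a < m0 -> m0 < c ->
  exists m, [/\ a < m, m < c & covering a m].
Proof.
move=> am0 m0c.
have [m /andP[am mc] min_m] :=
  @arg_minnP _ m0 (fun m => a < m < c) (fun m => #|[set z | a < z < m]|)
    (introT andP (conj am0 m0c)).
exists m; split => // z az zm.
have := min_m z; rewrite az (lt_trans zm mc) => /(_ isT); apply/negP; rewrite -ltnNge.
apply: proper_card; apply/properP; split.
  by apply/subsetP => w; rewrite !inE => /andP[-> wz]; apply: lt_trans wz zm.
by exists z; rewrite !inE ?az ?zm ?ltxx ?andbF.
Qed.

Lemma ex_upper_cover a c m0 : a < m0 -> m0 < c ->
  exists m, [/\ a < m, m < c & covering m c].
Proof.
move=> am0 m0c.
have [m /andP[am mc] min_m] :=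
  @arg_minnP _ m0 (fun m => a < m < c) (fun m => #|[set z | m < z < c]|)
    (introT andP (conj am0 m0c)).
exists m; split => // z mz zc.
have := min_m z; rewrite zc (lt_trans am mz) => /(_ isT); apply/negP; rewrite -ltnNge.
apply: proper_card; apply/properP; split; last by exists z; rewrite !inE ?mz ?zc ?ltxx.
by apply/subsetP => w; rewrite !inE => /andP[zw ->]; rewrite andbT (lt_trans mz zw).
Qed.

Lemma chain_in3 a m c : a <= m -> m <= c -> is_chain_in a c [set a; m; c].
Proof.
move=> am mc; have ac := le_trans am mc; apply/andP; split.
  by apply/forallP => x; apply/implyP; rewrite !inE -orbA => /or3P[] /eqP->;
    rewrite ?lexx ?ac ?am ?mc.
apply/forallP => x; apply/implyP; rewrite !inE -orbA => Hx.
apply/forallP => y; apply/implyP; rewrite !inE -orbA => Hy.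
by case/or3P: Hx => /eqP->; case/or3P: Hy => /eqP->; rewrite ?lexx ?ac ?am ?mc ?orbT.
Qed.

Lemma lng_lt2P a c : reflect (covering a c) (lng a c < 2)%N.
Proof.
rewrite /lng; have -> : forall M, (M.-1 < 2)%N = (M <= 2)%N by case=> [|[|[|]]].
apply: (iffP (bigmax_leqP _ _ _)) => [chains m am mc | cov C /andP[/forallP inC _]].
  have := chains _ (chain_in3 (ltW am) (ltW mc)).
  by rewrite -setUA !cardsU1 cards1 !inE (lt_eqF am) (lt_eqF mc) (lt_eqF (lt_trans am mc)).
apply: leq_trans (subset_leq_card (_ : C \subset [set a; c])) _; last first.
  by rewrite cards2; case: (a != c).
apply/subsetP => m mC; have /andP[am mc] := implyP (inC m) mC.
by rewrite !inE -covering_mem ?am ?(le_trans am mc).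
Qed.

Lemma lng_eq1 a c : a < c -> covering a c -> lng a c = 1%N.
Proof.
move=> ac /lng_lt2P; rewrite /lng.
have := leq_bigmax_cond (F := fun C : {set P} => #|C|) _ (chain_in3 (lexx a) (ltW ac)).
rewrite -setUA !cardsU1 cards1 !inE eqxx (lt_eqF ac) /=.
by case: (\max_(C | _) _) => [|[|[|]]].
Qed.

(* J^3_1(P,R): the condition l(x1,x3) < 1 means x1 = x3. *)
Definition J31 f := forall x, ev f x x x = 0.

Definition assoc3 f g h := mul3 (mul3 f g) h - mul3 f (mul3 g h).

Lemma J31_0 : J31 0.
Proof. by move=> x; rewrite ev0. Qed.

Lemma J31_D f g : J31 f -> J31 g -> J31 (f + g).
Proof. by move=> Jf Jg x; rewrite evD Jf Jg addr0. Qed.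

Lemma J31_B f g : J31 f -> J31 g -> J31 (f - g).
Proof. by move=> Jf Jg x; rewrite evB Jf Jg subr0. Qed.

Lemma J31_Z r f : J31 f -> J31 (scal3 r f).
Proof. by move=> Jf x; rewrite evZ Jf mulr0. Qed.

Lemma J31_e3 a b c : a != c -> J31 (e3 R a b c).
Proof.
move=> ac x; rewrite ev_e3; case: (eqVneq x a) => [->|]; last by rewrite !andbF.
by rewrite (negbTE ac) !andbF.
Qed.

Lemma J31_assoc f g h : J31 (assoc3 f g h).
Proof. by move=> x; rewrite evB !ev_mul_diag mulrA subrr. Qed.

Lemma e3_abc_assoc a b c : a <= b -> b < c ->
  e3 R a b c = assoc3 (e3 R a b c) (e3 R b c c) (e3 R b c c)
             - assoc3 (e3 R a b b) (e3 R b b c) (e3 R b c c).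
Proof.
move=> ab bc; have bc' := ltW bc; have ac := le_trans ab bc'.
apply: ev_ext => z1 z2 z3 z12 z23.
rewrite /assoc3 !evB !ev_mulR ?lexx // !ev_mulL ?lexx //.
rewrite !ev_e3 !eqxx !lexx ?ab ?bc' ?ac ?z12 ?z23 /= !andbT (gt_eqF bc) /= ?andbF.
rewrite (eq_le z2 b) !if_same.
case: (eqVneq z1 a) => [->|n1]; case: (eqVneq z3 c) => [->|_];
  rewrite /= ?ab ?lexx ?andbF ?andbT ?bc' ?subrr ?sub0r ?subr0 //=.
- by rewrite andbC opprB addrC subrK.
all: by rewrite ?if_same ?oppr0 ?subrr // (negbTE n1) /= ?andbF ?if_same ?subrr.
Qed.

Lemma e3_acc_assoc a c : a < c ->
  e3 R a c c = assoc3 (e3 R a a c) (e3 R a c c) (e3 R c c c)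
             - assoc3 (e3 R a a c) (e3 R a a c) (e3 R a c c).
Proof.
move=> ac; have ac' := ltW ac.
apply: ev_ext => z1 z2 z3 z12 z23.
rewrite /assoc3 !evB !ev_mulR ?lexx // !ev_mulL ?lexx //.
rewrite !ev_e3 !eqxx !lexx ?ac' ?z12 ?z23 /= !andbT ?(gt_eqF ac) /= ?andbF /= ?if_same.
rewrite (eq_le z2 c).
case: (eqVneq z1 a) => [->|_]; case: (eqVneq z3 c) => [->|_];
  rewrite /= ?lexx ?andbF ?andbT ?ac' ?subrr ?sub0r ?subr0 ?if_same ?oppr0 //=.
- by rewrite (lt_eqF ac) if_same andbC sub0r opprK subrK.
- by rewrite addr0.
Qed.

Lemma e3_abc_mul a b c : a < b -> b < c ->
  e3 R a b c = mul3 (e3 R a b b) (e3 R b b c).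
Proof.
move=> ab bc; have ab' := ltW ab; have bc' := ltW bc.
apply: ev_ext => z1 z2 z3 z12 z23.
rewrite ev_mulL ?lexx // !ev_e3 !eqxx !lexx ?bc' ?z12 ?z23 /= (eq_le z2 b).
case: (eqVneq z3 c) => [->|_]; rewrite ?bc' /= ?andbF ?andbT ?if_same //.
by case: (z1 == a) => //=; rewrite andbC.
Qed.

Lemma e3_aac_mul a m c : a < m -> m < c -> covering a m ->
  e3 R a a c = mul3 (e3 R a a m) (e3 R a m c) - mul3 (e3 R a m m) (e3 R m m c).
Proof.
move=> am mc cov; have am' := ltW am; have mc' := ltW mc.
apply: ev_ext => z1 z2 z3 z12 z23.
rewrite evB !ev_mulL ?lexx // !ev_e3 !eqxx !lexx ?am' ?mc' ?z12 ?z23 /=.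
case: (eqVneq z1 a) => [_|_] /=; last by rewrite subrr.
case: (eqVneq z3 c) => [->|_] /=; last by rewrite !andbF /= !if_same subrr.
rewrite !andbT mc' -!eq_le covering_mem // (eq_sym m).
by case: (eqVneq z2 a) => [->|_]; rewrite ?(lt_eqF am) ?subr0 ?subrr.
Qed.

Lemma e3_acc_mul a m c : a < m -> m < c -> covering m c ->
  e3 R a c c = mul3 (e3 R a m c) (e3 R m c c) - mul3 (e3 R a m m) (e3 R m m c).
Proof.
move=> am mc cov; have am' := ltW am; have mc' := ltW mc.
apply: ev_ext => z1 z2 z3 z12 z23.
rewrite evB !ev_mulL ?lexx // !ev_e3 !eqxx !lexx ?am' ?mc' ?z12 ?z23 /=.
case: (eqVneq z1 a) => [_|_] /=; last by rewrite subrr.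
case: (eqVneq z3 c) => [->|_] /=; last by rewrite !andbF /= !if_same subrr.
rewrite !andbT mc' -!eq_le covering_mem // (eq_sym m) lexx.
by case: (eqVneq z2 c) => [->|_]; rewrite ?(gt_eqF mc) ?orbT ?subr0 ?orbF ?subrr.
Qed.

Lemma J32E f : J32 f <->
  forall x y z, x <= y -> y <= z -> (lng x z < 2)%N -> ev f x y z = 0.
Proof.
split=> [Jf x y z xy yz lxz|Jf t]; first by rewrite (ev_in f (introT andP (conj xy yz))) Jf.
by rewrite -ev_val; case: t => [[[x y] z] /= /andP[xy yz]]; apply: Jf.
Qed.

Lemma J32_mul f g : J32 f -> J32 (mul3 f g).
Proof.
move/J32E => Jf; apply/J32E => x y z xy yz /lng_lt2P cov.
rewrite ev_mul //; apply: big1 => y1 _; apply: big1 => y2 _.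
case: ifP => // /and4P[xy1 y1y yy2 y2z].
rewrite Jf ?mul0r //; first exact: le_trans y1y yy2.
by apply/lng_lt2P => m xm my2; apply: cov xm (lt_le_trans my2 y2z).
Qed.

Definition balanced f := forall a c, a < c -> covering a c -> ev f a a c = ev f a c c.

Lemma balanced_0 : balanced 0.
Proof. by move=> a c _ _; rewrite !ev0. Qed.

Lemma balanced_D f g : balanced f -> balanced g -> balanced (f + g).
Proof. by move=> Bf Bg a c ac cov; rewrite !evD Bf ?Bg. Qed.

Lemma balanced_B f g : balanced f -> balanced g -> balanced (f - g).
Proof. by move=> Bf Bg a c ac cov; rewrite !evB Bf ?Bg. Qed.

Lemma balanced_Z r f : balanced f -> balanced (scal3 r f).
Proof. by move=> Bf a c ac cov; rewrite !evZ Bf. Qed.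

Lemma balanced_mul g h : J31 g -> J31 h -> balanced (mul3 g h).
Proof.
move=> Jg Jh a c ac cov.
rewrite ev_mul_aac ?ev_mul_acc ?(ltW ac) // !sum_covering //.
by rewrite Jg Jh mul0r mulr0 add0r addr0.
Qed.

Lemma e3_not_balanced x y : x < y -> covering x y -> ~ balanced (e3 R x y y).
Proof.
move=> xy cov /(_ x y xy cov)/eqP; rewrite !ev_e3 !lexx (ltW xy) (lt_eqF xy) !eqxx.
by rewrite andbF eq_sym oner_eq0.
Qed.

Definition edge x y : I3 P R := e3 R x x y + e3 R x y y.

Lemma J31_edge x y : x < y -> J31 (edge x y).
Proof. by move=> xy; apply: J31_D; apply: J31_e3; rewrite lt_eqF. Qed.

Lemma edge_mul_e3 x y : x < y -> mul3 (edge x y) (e3 R y y y) = e3 R x y y.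
Proof.
move=> xy; apply: ev_ext => z1 z2 z3 z12 z23.
rewrite mul3Dl evD !ev_mulL ?lexx ?(ltW xy) // !ev_e3 z12 z23 (lt_eqF xy) !eqxx.
rewrite /= !andbF !if_same add0r -[y <= z2 <= y]eq_le (eq_sym y) lexx.
case: (z1 == x) (z2 == y) => [] [] //=.
by case: (eqVneq z3 y) => [->|]; rewrite ?lexx ?andbF.
Qed.

Lemma edge_idem x y : x < y -> covering x y -> mul3 (edge x y) (edge x y) = edge x y.
Proof.
move=> xy cov; have xy' := ltW xy; have nxy := lt_eqF xy; have nyx := gt_eqF xy.
apply: ev_ext => z1 z2 z3 z12 z23.
rewrite /edge mul3Dl !mul3Dr !evD !ev_mulL ?lexx // !ev_e3 z12 z23 /= !eqxx ?nxy ?nyx /=.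
rewrite ?andbF ?if_same ?add0r ?addr0 ?lexx /=.
case: (z1 == x) => /=; last by rewrite addr0.
case: (eqVneq z3 y) => [->|_]; last by rewrite !andbF if_same addr0.
rewrite xy' lexx covering_mem //= !andbT.
by case: (eqVneq z2 x) => [->|_] /=; rewrite ?nxy ?addr0 ?add0r.
Qed.

Lemma edge_corner x y g : x < y -> covering x y ->
  mul3 (mul3 (edge x y) g) (edge x y) = scal3 (ev g x y y) (edge x y).
Proof.
move=> xy cov; have xy' := ltW xy; have nxy := lt_eqF xy; have nyx := gt_eqF xy.
apply: ev_ext => z1 z2 z3 z12 z23.
rewrite /edge mul3Dr mul3Dl evZ !evD !ev_mulR ?lexx // !evD.
rewrite !ev_mulL ?lexx // !ev_e3 z12 z23 /=.
have -> : ev g x y x = 0 by rewrite ev_out // (lt_geF xy) andbF.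
rewrite (lt_geF xy) xy' /= ?andbF !if_same add0r addr0.
case: (eqVneq z1 x) => [->|_] /=; last by rewrite ?andbF !if_same !add0r mulr0.
rewrite lexx /=; case: (eqVneq z3 y) => [_|_] /=; last by rewrite !andbF addr0 mulr0.
rewrite !andbT if_same !add0r (covering_mem z2 xy' cov).
case: (eqVneq z2 x) => [->|_] /=; first by rewrite nxy addr0 mulr1.
by case: (z2 == y); rewrite add0r ?mulr1 ?mulr0.
Qed.

Lemma ev_corner_e3 f g s t a c : s < t -> a < c -> covering a c ->
  ev (mul3 (mul3 f (e3 R s t t)) g) a a c =
  if (a == s) && (c == t) then ev f s s t * ev g s t t else 0.
Proof.
move=> st ac cov; rewrite ev_mul_aac ?(ltW ac) // sum_covering //.
rewrite !ev_mulR ?lexx ?(ltW st) // (ltW ac) /=.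
case: (eqVneq a s) => [->|ns].
  rewrite (lt_eqF st) lexx (ltW st) /= mul0r add0r andbT.
  by case: (eqVneq c t) => [->|]; rewrite ?mul0r.
have fs0 : s <= a -> ev f a s t = 0.
  move=> sa; rewrite ev_out // negb_and; apply/orP; left.
  by apply: contra ns => a_s; apply/eqP/le_anti; rewrite a_s sa.
by case: (boolP (s <= a)) => [/fs0->|_]; rewrite ?andbF ?if_same !mul0r addr0.
Qed.

Section Idempotent.
Variable f : I3 P R.
Hypotheses (f_idem : mul3 f f = f) (f_J31 : J31 f).

Lemma idem_ev_aac a c : a < c -> covering a c -> ev f a a c * ev f a c c = ev f a a c.
Proof.
move=> ac cov.
by rewrite -[in RHS]f_idem ev_mul_aac ?(ltW ac) // sum_covering // f_J31 mul0r add0r.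
Qed.

Lemma idem_balanced : balanced f.
Proof.
move=> a c ac cov; rewrite -idem_ev_aac //.
by rewrite -[in RHS]f_idem ev_mul_acc ?(ltW ac) // sum_covering // f_J31 mulr0 addr0.
Qed.

Lemma idem_edge_idem a c : a < c -> covering a c -> ev f a a c * ev f a a c = ev f a a c.
Proof. by move=> ac cov; rewrite {2}idem_balanced // idem_ev_aac. Qed.

Lemma idem_unit_edge : indecomposable R -> ~ J32 f ->
  exists s t, [/\ s < t, covering s t & ev f s s t = 1].
Proof.
move=> Rind notJ.
case: (pickP (fun t : trip P => (lng (val t).1.1 (val t).2 < 2)%N && (f t != 0)))
  => [t0 /andP[l0 ft0]|none]; last first.
  by case: notJ => t lt; move: (none t); rewrite lt => /negbFE/eqP.
move: ft0 l0; rewrite -ev_val; case: t0 => [[[s m] t] /= /andP[sm mt]] fsmt /lng_lt2P cov.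
have st : s < t.
  rewrite lt_neqAle (le_trans sm mt) andbT; apply: contraNneq fsmt => eq_st.
  by move: mt; rewrite -eq_st => ms; rewrite (@le_anti _ _ m s) ?sm ?ms // f_J31.
exists s, t; split => //.
have : ev f s s t != 0.
  move: fsmt; have := covering_mem m (ltW st) cov; rewrite sm mt.
  by case/esym/orP=> /eqP->; rewrite -?idem_balanced.
by case: (Rind _ (idem_edge_idem st cov)) => ->; rewrite ?eqxx.
Qed.

Lemma J32_sub_edge s t : s < t ->
  (forall a c, a < c -> covering a c -> ev f a a c = ((a == s) && (c == t))%:R) ->
  J32 (f - edge s t).
Proof.
move=> st f_edges; apply/J32E => a m c am mc /lng_lt2P cov.
rewrite evB evD !ev_e3 am mc /=.
case: (eqVneq a c) => [eq_ac|ac].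
  subst c; have -> : m = a by apply/le_anti; rewrite am mc.
  rewrite f_J31; case: (eqVneq a s) => [->|];
    by rewrite ?(lt_eqF st) ?andbF /= ?addr0 ?subrr.
have lt_ac : a < c by rewrite lt_neqAle ac (le_trans am mc).
have := covering_mem m (ltW lt_ac) cov; rewrite am mc => /esym/orP[]/eqP->;
  rewrite -?idem_balanced // f_edges //.
  by case: (eqVneq a s) => [->|]; case: (eqVneq c t);
    rewrite /= ?(lt_eqF st) ?andbF ?addr0 ?subrr.
by case: (eqVneq a s); case: (eqVneq c t) => [->|];
  rewrite /= ?(gt_eqF st) ?andbF ?add0r ?subrr ?oppr0.
Qed.

End Idempotent.

End Incidence.

Section Homomorphism.
Context {dP dQ : Order.disp_t} (P : finPOrderType dP) (Q : finPOrderType dQ).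
Context (R : comNzRingType) (Th : I3 P R -> I3 Q R).
Hypotheses (ThD : forall f g, Th (f + g) = Th f + Th g)
  (ThZ : forall r f, Th (scal3 r f) = scal3 r (Th f))
  (ThM : forall f g, Th (mul3 f g) = mul3 (Th f) (Th g)).
Implicit Types (f g h : I3 P R) (a b c x y z : P).

Lemma hom_B f g : Th (f - g) = Th f - Th g.
Proof. by apply: (addIr (Th g)); rewrite -ThD !subrK. Qed.

Lemma hom_0 : Th 0 = 0.
Proof. by rewrite -(subrr 0) hom_B subrr. Qed.

Lemma hom_assoc f g h : Th (assoc3 f g h) = assoc3 (Th f) (Th g) (Th h).
Proof. by rewrite /assoc3 hom_B !ThM. Qed.

Lemma hom_span (S : I3 Q R -> Prop) f :
  S 0 -> (forall u v, S u -> S v -> S (u + v)) -> (forall r u, S u -> S (scal3 r u)) ->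
  (forall x y z, x <= y -> y <= z -> ev f x y z != 0 -> S (Th (e3 R x y z))) ->
  S (Th f).
Proof.
move=> S0 SD SZ Se; rewrite (e3_decomp f) (big_morph Th ThD hom_0).
apply: (big_ind S) => // -[[[x y] z] /= xyz] _; rewrite ThZ -(ev_in f xyz).
have [->|fxyz] := eqVneq (ev f x y z) 0; first by rewrite scal3_0.
by case/andP: xyz => xy yz; apply/SZ/Se.
Qed.

Lemma hom_e3_J31 a b c : a <= b -> b <= c -> a != c -> J31 (Th (e3 R a b c)).
Proof.
move=> ab bc ac; have [eq_bc|bc'] := eqVneq b c.
  subst b; rewrite e3_acc_assoc; last by rewrite lt_neqAle ac ab.
  by rewrite hom_B !hom_assoc; apply: J31_B; apply: J31_assoc.
rewrite e3_abc_assoc //; last by rewrite lt_neqAle bc' bc.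
by rewrite hom_B !hom_assoc; apply: J31_B; apply: J31_assoc.
Qed.

Lemma hom_J31 f : J31 f -> J31 (Th f).
Proof.
move=> Jf; apply: hom_span => [|||x y z xy yz]; [exact: J31_0|exact: J31_D|exact: J31_Z|].
case: (eqVneq x z) => [exz|xz _]; last exact: hom_e3_J31.
subst z; have -> : y = x by apply/le_anti; rewrite xy yz.
by rewrite Jf eqxx.
Qed.

Lemma hom_e3_balanced a b c : a <= b -> b <= c -> ~~ (lng a c < 2)%N ->
  balanced (Th (e3 R a b c)).
Proof.
move=> ab bc /lng_lt2P/covering_between[m0 am0 m0c].
have J31e x y z : x <= y -> y <= z -> x < z -> J31 (Th (e3 R x y z)).
  by move=> xy yz /lt_eqF/negbT; apply: hom_e3_J31.
have [eq_ba|ba] := eqVneq b a.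
  subst b; have [m [am mc cov]] := ex_lower_cover am0 m0c.
  rewrite (e3_aac_mul R am mc cov) hom_B !ThM.
  apply: balanced_B; apply: balanced_mul;
    by apply: J31e; rewrite ?lexx ?ltW // (lt_trans am mc).
have [eq_bc|bc'] := eqVneq b c.
  subst b; have [m [am mc cov]] := ex_upper_cover am0 m0c.
  rewrite (e3_acc_mul R am mc cov) hom_B !ThM.
  apply: balanced_B; apply: balanced_mul;
    by apply: J31e; rewrite ?lexx ?ltW // (lt_trans am mc).
have ab' : a < b by rewrite lt_neqAle eq_sym ba ab.
have bc'' : b < c by rewrite lt_neqAle bc' bc.
rewrite (e3_abc_mul R ab' bc'') ThM.
by apply: balanced_mul; apply: J31e; rewrite ?lexx ?ltW.
Qed.

Lemma hom_J32_balanced f : J32 f -> balanced (Th f).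
Proof.
move/J32E => Jf; apply: hom_span => [|||x y z xy yz].
- exact: balanced_0.
- exact: balanced_D.
- exact: balanced_Z.
case: (boolP (lng x z < 2)%N) => [lxz|lxz _]; last exact: hom_e3_balanced.
by rewrite Jf ?eqxx.
Qed.

End Homomorphism.

Section Isomorphism.
Context {dP dQ : Order.disp_t} (P : finPOrderType dP) (Q : finPOrderType dQ).
Context (R : comNzRingType) (Phi : I3 P R -> I3 Q R) (Psi : I3 Q R -> I3 P R).
Hypotheses (PhiD : forall f g, Phi (f + g) = Phi f + Phi g)
  (PhiZ : forall r f, Phi (scal3 r f) = scal3 r (Phi f))
  (PhiM : forall f g, Phi (mul3 f g) = mul3 (Phi f) (Phi g))
  (PhiK : cancel Phi Psi) (PsiK : cancel Psi Phi).

Let PsiD f g : Psi (f + g) = Psi f + Psi g.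
Proof. by apply: (can_inj PhiK); rewrite PhiD !PsiK. Qed.

Let PsiZ r f : Psi (scal3 r f) = scal3 r (Psi f).
Proof. by apply: (can_inj PhiK); rewrite PhiZ !PsiK. Qed.

Let PsiM f g : Psi (mul3 f g) = mul3 (Psi f) (Psi g).
Proof. by apply: (can_inj PhiK); rewrite PhiM !PsiK. Qed.

Variables (x y : P).
Hypotheses (xy : x < y) (cov_xy : covering x y).
Let f := Phi (edge R x y).

Lemma image_edge_idem : mul3 f f = f.
Proof. by rewrite /f -PhiM edge_idem. Qed.

Lemma image_edge_J31 : J31 f.
Proof. exact: hom_J31 PhiD PhiZ PhiM _ (J31_edge R xy). Qed.

Lemma image_edge_notJ32 : ~ J32 f.
Proof.
move=> Jf; have J_xyy : J32 (Phi (e3 R x y y)).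
  by rewrite -(edge_mul_e3 R xy) PhiM; apply: J32_mul.
apply: (e3_not_balanced (R := R) xy cov_xy); rewrite -[e3 R x y y]PhiK.
exact: hom_J32_balanced PsiD PsiZ PsiM _ J_xyy.
Qed.

Lemma image_edge_corner g : mul3 (mul3 f g) f = scal3 (ev (Psi g) x y y) f.
Proof. by rewrite /f -{1}(PsiK g) -!PhiM edge_corner // PhiZ. Qed.

Lemma image_edge_support : indecomposable R ->
  exists s t, [/\ s < t, covering s t &
    forall a c, a < c -> covering a c -> ev f a a c = ((a == s) && (c == t))%:R].
Proof.
move=> Rind.
have [s [t [st cov_st fst]]] :=
  idem_unit_edge image_edge_idem image_edge_J31 Rind image_edge_notJ32.
have fstt : ev f s t t = 1.
  by rewrite -(idem_balanced image_edge_idem image_edge_J31).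
have corner a c : a < c -> covering a c ->
    (if (a == s) && (c == t) then 1 else 0) = ev (Psi (e3 R s t t)) x y y * ev f a a c.
  move=> ac cov; rewrite -evZ -image_edge_corner ev_corner_e3 //.
  by rewrite fst fstt mulr1.
have r1 : ev (Psi (e3 R s t t)) x y y = 1.
  by have := corner s t st cov_st; rewrite !eqxx /= fst mulr1.
exists s, t; split => // a c ac cov.
by rewrite -[LHS]mul1r -{1}r1 -corner //; case: (_ && _).
Qed.

Lemma image_edge_J32_sub : indecomposable R ->
  exists s t, [/\ s < t, covering s t & J32 (f - edge R s t)].
Proof.
move=> /image_edge_support[s [t [st cov_st f_support]]]; exists s, t; split=> //.
exact: J32_sub_edge image_edge_idem image_edge_J31 _ _ st f_support.
Qed.

End Isomorphism.

Unset Implicit Arguments.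

Theorem corollary3p3 (dP dQ : Order.disp_t)
  (P : finPOrderType dP) (Q : finPOrderType dQ) (R : comNzRingType)
  (Hind : indecomposable R)
  (Phi : I3 P R -> I3 Q R)
  (Phi_lin : Rlinear3 Phi)
  (Phi_bij : bijective Phi)
  (Phi_mul : forall f g : I3 P R, Phi (mul3 f g) = mul3 (Phi f) (Phi g)) :
  forall x y : P, x < y -> lng x y = 1%N ->
  exists (u v : Q), [/\ u < v, lng u v = 1%N &
    exists sigma : I3 Q R, J32 sigma /\
      Phi (e3 R x x y + e3 R x y y) = e3 R u u v + e3 R u v v + sigma].
Proof.
move=> x y xy lxy; case: Phi_lin => PhiD PhiZ; case: Phi_bij => Psi PhiK PsiK.
have cov_xy : covering x y by apply/lng_lt2P; rewrite lxy.
have [s [t [st cov_st J_sigma]]] :=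
  image_edge_J32_sub PhiD PhiZ Phi_mul PhiK PsiK xy cov_xy Hind.
exists s, t; split=> //; first exact: lng_eq1.
by exists (Phi (edge R x y) - edge R s t); split; last by rewrite [RHS]addrC subrK.
Qed.
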